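(* Let $B=\mathcal L'\cup\mathcal J'$ with $\mathcal L'\subseteq\mathcal L$, $\mathcal J'\subseteq\mathcal J$ be a nondegenerate feasible basis of $\mathrm{LP}(\theta,0)$. If $$0\le\varepsilon<\min_{j\in\mathcal J}\frac{\sum_{\ell\in\mathsf S(\mathcal T(j))}\mu_\ell-\sum_{k\in\mathsf C(\mathcal T(j))}\lambda_k}{|\mathsf S(\mathcal T(j))|},$$ then $B$ is also a nondegenerate feasible basis of $\mathrm{LP}(\theta,\varepsilon)$.
   Context: $\mathcal I=\{1,\dots,I\}$, $\mathcal J=\{1,\dots,J\}$ disjoint, $\mathcal L\subseteq\mathcal I\times\mathcal J$, $\mathcal S_i=\{j:(ij)\in\mathcal L\}$, $\mathcal C_j=\{i:(ij)\in\mathcal L\}$, $\lambda\in\mathbb R^I_{>0}$, $\mu\in\mathbb R^J_{>0}$, $\theta\in\mathbb R^{\mathcal L}_{\ge0}$. $\mathrm{LP}(\theta,\varepsilon)$ in standard form: maximize $\sum\theta_{ij}x_{ij}$ s.t. $\sum_{j\in\mathcal S_i}x_{ij}=\lambda_i$, $\sum_{i\in\mathcal C_j}x_{ij}+\sigma_j=\mu_j-\varepsilon$, $x,\sigma\ge0$, variables indexed by $\mathcal L\cup\mathcal J$. A basis is $B\subseteq\mathcal L\cup\mathcal J$, $|B|=I+J$, with invertible column submatrix; its basic solution has non-basic variables $0$; it is feasible if the basic solution is nonnegative and nondegenerate if every basic variable is nonzero. For a basis $B=\mathcal L'\cup\mathcal J'$, the subgraph of $(\mathcal I\cup\mathcal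 J,\mathcal L)$ with edges $\mathcal L'$ is a spanning forest in which each tree contains exactly one node of $\mathcal J'$, taken as its root; $\mathcal T(v)$ is the subtree rooted at $v$ (including $v$), $\mathsf C(\mathcal T(v))=\mathcal T(v)\cap\mathcal I$, $\mathsf S(\mathcal T(v))=\mathcal T(v)\cap\mathcal J$. *)

From HB Require Import structures.
From mathcomp Require Import all_boot all_order all_algebra.
From mathcomp Require Import boolp.
Set Implicit Arguments. Unset Strict Implicit. Unset Printing Implicit Defensive.
Import Order.TTheory GRing.Theory Num.Theory.
Local Open Scope ring_scope.

Section LPDefs.
Variables (R : realFieldType) (nI nJ : nat).

(* Variables of LP(theta,eps): x_(ij) (index inl (i,j), meaningful only for
   (i,j) in L) and slack sigma_j (index inr j). *)
Definition var := (('I_nI * 'I_nJ) + 'I_nJ)%type.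
Definition node := ('I_nI + 'I_nJ)%type.

Variable L : {set 'I_nI * 'I_nJ}.

Definition valid_var (v : var) : bool :=
  match v with inl e => e \in L | inr _ => true end.

(* Constraint matrix: rows 'I_(nI+nJ); the first nI rows are the
   customer constraints i, the last nJ rows the server constraints j. *)
Definition coef (r : 'I_(nI + nJ)) (v : var) : R :=
  match split r, v with
  | inl i, inl e => (e.1 == i)%:R
  | inr j, inl e => (e.2 == j)%:R
  | inl _, inr _ => 0
  | inr j, inr j' => (j' == j)%:R
  end.

Definition rhs (lam : 'I_nI -> R) (mu : 'I_nJ -> R) (eps : R)
  (r : 'I_(nI + nJ)) : R :=
  match split r with inl i => lam i | inr j => mu j - eps end.

Definition basis_mx (B : {set var}) (h : #|B| = (nI + nJ)%N) : 'M[R]_(nI + nJ) :=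
  \matrix_(r, c) coef r (enum_val (cast_ord (esym h) c)).

Definition is_basis (B : {set var}) : Prop :=
  B \subset [pred v | valid_var v] /\
  exists h : #|B| = (nI + nJ)%N, basis_mx h \in unitmx.

Definition basic_solution lam mu eps (B : {set var}) (z : var -> R) : Prop :=
  (forall v, v \notin B -> z v = 0) /\
  (forall r, \sum_(v : var) coef r v * z v = rhs lam mu eps r).

Definition feasible_basis lam mu eps (B : {set var}) : Prop :=
  is_basis B /\
  (forall z, basic_solution lam mu eps B z -> forall v, 0 <= z v).

Definition nondeg_feasible_basis lam mu eps (B : {set var}) : Prop :=
  feasible_basis lam mu eps B /\
  (forall z, basic_solution lam mu eps B z -> forall v, v \in B -> z v != 0).

(* The forest of a basis B: edges L' = {e | inl e \in B}, roots J' = {j | inr j \in B}. *)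
Definition adj (B : {set var}) : rel node :=
  fun u w => match u, w with
             | inl i, inr j => inl (i, j) \in B
             | inr j, inl i => inl (i, j) \in B
             | _, _ => false
             end.

Definition is_root (B : {set var}) (u : node) : bool :=
  match u with inr j => inr j \in B | inl _ => false end.

(* u belongs to the subtree T(v) rooted at v: v lies on the (simple) path of
   the forest from u to the root of u's tree. *)
Definition in_subtree (B : {set var}) (v u : node) : Prop :=
  exists p : seq node,
    [/\ path (adj B) u p, is_root B (last u p), uniq (u :: p) & v \in u :: p].

Definition subtreeC (B : {set var}) (j : 'I_nJ) : {set 'I_nI} :=
  [set k | `[< in_subtree B (inr j) (inl k) >] ].
Definition subtreeS (B : {set var}) (j : 'I_nJ) : {set 'I_nJ} :=
  [set l | `[< in_subtree B (inr j) (inr l) >] ].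

Definition subtree_ratio (lam : 'I_nI -> R) (mu : 'I_nJ -> R)
  (B : {set var}) (j : 'I_nJ) : R :=
  ((\sum_(l in subtreeS B j) mu l) - (\sum_(k in subtreeC B j) lam k))
    / (#|subtreeS B j|)%:R.

End LPDefs.

From HB Require Import structures.
From mathcomp Require Import all_boot all_order all_algebra.
From mathcomp Require Import boolp.
From mathcomp Require Import lra.
Import Order.TTheory GRing.Theory Num.Theory.
Local Open Scope ring_scope.

(* Summing the constraint rows of the servers in a subtree T(u) and subtracting those of its
   customers cancels every basic column except the variable joining u to its parent (the slack,
   when u is a root), so this variable equals +-(sum_{S(T(u))} (mu - eps) - sum_{C(T(u))} lam).
   When u is a server this is positive precisely by the bound on eps; when u is a customer it is
   increasing in eps, so positivity is inherited from eps = 0.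
   The forest structure itself comes from the invertibility of the basis matrix: the alternating
   sum of the columns along a path from u to a root solves A w = e_u, which makes such paths
   unique, and a connected component without a root would yield a combination of rows vanishing
   on all basic columns. *)

Lemma split_lshift m n (k : 'I_m) : split (lshift n k) = inl k.
Proof. exact: (unsplitK (inl k : 'I_m + 'I_n)). Qed.

Lemma split_rshift m n (l : 'I_n) : split (rshift m l) = inr l.
Proof. exact: (unsplitK (inr l : 'I_m + 'I_n)). Qed.

Lemma sum_delta (R : pzSemiRingType) (T : finType) (Q : pred T) (a : T) :
  \sum_(t | Q t) (a == t)%:R = (Q a)%:R :> R.
Proof.
rewrite big_mkcond (bigD1 a) //= eqxx big1 ?addr0; first by case: (Q a).
by move=> t /negbTE; rewrite eq_sym => ->; case: (Q t).
Qed.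

Section BasisForest.
Set Implicit Arguments. Unset Strict Implicit.
Variables (R : realFieldType) (nI nJ : nat) (B : {set var nI nJ}).
Hypothesis basisB : exists h : #|B| = (nI + nJ)%N, basis_mx R h \in unitmx.

Local Notation var := (var nI nJ).
Local Notation node := (node nI nJ).

Definition lhs (w : var -> R) (r : 'I_(nI + nJ)) : R := \sum_v coef R r v * w v.

Definition supported (w : var -> R) := forall v, v \notin B -> w v = 0.

Lemma lhsB (w1 w2 : var -> R) r :
  lhs (fun v => w1 v - w2 v) r = lhs w1 r - lhs w2 r.
Proof. by rewrite /lhs -sumrB; apply: eq_bigr => v _; rewrite mulrBr. Qed.

Lemma lhs_delta (v0 : var) r : lhs (fun v => (Some v0 == Some v)%:R) r = coef R r v0.
Proof.
rewrite /lhs (bigD1 v0) //= eqxx mulr1 big1 ?addr0 // => v nv.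
by rewrite (inj_eq Some_inj) eq_sym (negbTE nv) mulr0.
Qed.

Lemma supported_solution_exists (b : 'I_(nI + nJ) -> R) :
  exists2 w, supported w & forall r, lhs w r = b r.
Proof.
case: basisB => h hu.
pose col (c : 'I_(nI + nJ)) := enum_val (cast_ord (esym h) c).
pose x := invmx (basis_mx R h) *m \col_r b r.
exists (fun v => \sum_c (col c == v)%:R * x c ord0).
  move=> v vB; apply: big1 => c _.
  have : col c \in B by apply: enum_valP.
  by case: eqP => [->|]; rewrite ?(negbTE vB) // mul0r.
move=> r; have -> : b r = (basis_mx R h *m x) r ord0.
  by rewrite mulmxA mulmxV // mul1mx mxE.
rewrite mxE /lhs; under eq_bigr do rewrite mulr_sumr.
rewrite exchange_big /=; apply: eq_bigr => c _.
rewrite (bigD1 (col c)) //= eqxx mul1r big1 ?addr0; first by rewrite /basis_mx mxE.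
by move=> v /negbTE; rewrite eq_sym => ->; rewrite mul0r mulr0.
Qed.

Lemma supported_kernel0 (w : var -> R) :
  supported w -> (forall r, lhs w r = 0) -> forall v, w v = 0.
Proof.
case: basisB => h hu sw hw.
pose col (c : 'I_(nI + nJ)) := enum_val (cast_ord (esym h) c).
pose x := \col_c w (col c).
have Mx0 : basis_mx R h *m x = 0.
  apply/matrixP => r k; rewrite [RHS]mxE -(hw r) mxE /lhs.
  rewrite (bigID (mem B)) /= [X in _ + X]big1 ?addr0 => [|v /sw ->]; last by rewrite mulr0.
  rewrite [RHS]big_enum_val /= [RHS](reindex (cast_ord (esym h))) /=.
    by apply: eq_bigr => c _; rewrite !mxE.
  by exists (cast_ord h) => c _; rewrite ?cast_ordK ?cast_ordKV.
have x0 : x = 0 by rewrite -[x](mulKmx hu) Mx0 mulmx0.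
move=> v; case vB: (v \in B); last by rewrite sw ?vB.
have := congr1 (fun M : 'cV[R]_(nI + nJ) => M (cast_ord h (enum_rank_in vB v)) ord0) x0.
by rewrite !mxE /col cast_ordK enum_rankK_in.
Qed.

Definition edge_var (a b : node) : option var :=
  match a, b with
  | inl i, inr j | inr j, inl i => Some (inl (i, j))
  | _, _ => None
  end.

(* The slack of a root plays the role of its parent edge. *)
Definition parent_var (u : node) (p : seq node) : option var :=
  if p is x :: _ then edge_var u x else if u is inr j then Some (inr j) else None.

Arguments parent_var : simpl never.

Definition basic_link (o : option var) : bool := if o is Some v then v \in B else false.

Lemma adjE a b : adj B a b = basic_link (edge_var a b).
Proof. by case: a; case: b. Qed.

Lemma adj_neq a b : adj B a b -> b != a.
Proof. by apply: contraTneq => ->; case: a. Qed.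

Lemma adj_sym a b : adj B a b = adj B b a.
Proof. by case: a; case: b. Qed.

Lemma edge_var_injr a b c v : edge_var a b = Some v -> edge_var a c = Some v -> b = c.
Proof. by case: a b c => [?|?] [?|?] [?|?] //= <- [] *; subst. Qed.

Lemma edge_var_end a b c d v :
  edge_var a b = Some v -> edge_var c d = Some v -> c = a \/ c = b.
Proof. by case: a b c d => [?|?] [?|?] [?|?] [?|?] //= <- [] *; subst; auto. Qed.

Lemma basic_link_neq o v : basic_link o -> v \notin B -> (o == Some v) = false.
Proof. by case: o => // v' v'B; apply: contraNF => /eqP [<-]. Qed.

Definition root_path (u : node) (p : seq node) : bool :=
  [&& path (adj B) u p, is_root B (last u p) & uniq (u :: p)].

Lemma root_path_nil j : inr j \in B -> root_path (inr j) [::].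
Proof. by move=> jB; rewrite /root_path /= jB. Qed.

Lemma root_path_link u p : root_path u p -> basic_link (parent_var u p).
Proof.
case: p => [|x p] /and3P [/= hp hr _]; first by case: u hr.
by case/andP: hp; rewrite adjE.
Qed.

Lemma root_path_suffix u p x q : root_path u (p ++ x :: q) -> root_path x q.
Proof.
rewrite /root_path cat_path last_cat -cat_cons cat_uniq /=.
by case/and3P => /andP [_ /andP [_ ->]] -> /and3P [_ _ ->].
Qed.

Lemma root_path_behead u x p : root_path u (x :: p) -> root_path x p.
Proof. exact: (@root_path_suffix u [::]). Qed.

Lemma root_path_cons a b q :
  adj B a b -> a \notin b :: q -> root_path b q -> root_path a (b :: q).
Proof. by move=> ab aq /and3P [bq rq uq]; rewrite /root_path /= ab bq rq aq. Qed.

Fixpoint path_vec (u : node) (p : seq node) (v : var) {struct p} : R :=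
  (parent_var u p == Some v)%:R - (if p is x :: q then path_vec x q v else 0).

Lemma path_vec_supported u p : root_path u p -> supported (path_vec u p).
Proof.
elim: p u => [|x p IH] u hu v vB /=; rewrite (basic_link_neq (root_path_link hu)) ?subrr //.
by rewrite IH ?(root_path_behead hu) // subrr.
Qed.

Lemma coef_parent_var r u p v : parent_var u p = Some v ->
  coef R r v = (split r == u)%:R + (if p is x :: _ then (split r == x)%:R else 0).
Proof.
rewrite /parent_var /coef.
case: p => [|x p]; case: u => [i|j] //; [|case: x => [k|k] //..] => -[<-] /=.
all: by case: (split r) => ? /=; rewrite ?addr0 ?add0r // eq_sym.
Qed.

Lemma lhs_path_vec u p r : root_path u p -> lhs (path_vec u p) r = (split r == u)%:R.
Proof.
elim: p u => [|x p IH] u hu; have := root_path_link hu.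
all: case hv: parent_var => [v|] // _; rewrite /lhs; under eq_bigr do rewrite /= hv.
  by under eq_bigr do rewrite subr0; rewrite -/(lhs _ r) lhs_delta (coef_parent_var _ hv) addr0.
rewrite -/(lhs (fun v' => _ - _) r) lhsB lhs_delta IH ?(root_path_behead hu) //.
by rewrite (coef_parent_var _ hv) addrK.
Qed.

Lemma edge_var_parent_nil a b v u : edge_var a b = Some v -> parent_var u [::] != Some v.
Proof. by case: a b u => [?|?] [?|?] [?|?] //= [<-]. Qed.

Lemma path_vec_edge0 u y v x p :
  edge_var u y = Some v -> u \notin x :: p -> path_vec x p v = 0.
Proof.
move=> uy; elim: p x => [|x' p IH] x; rewrite in_cons negb_or => /andP [ux up] /=.
  by rewrite (negbTE (edge_var_parent_nil x uy)) subrr.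
rewrite IH // subr0 /parent_var; case: eqP => // /edge_var_end /(_ uy).
by case=> eu; move: ux up; rewrite eu ?inE eqxx.
Qed.

Lemma path_vec_eq u p q : root_path u p -> root_path u q -> path_vec u p =1 path_vec u q.
Proof.
move=> hp hq v; apply/eqP; rewrite -subr_eq0; apply/eqP; move: v.
apply: (supported_kernel0 (w := fun v => path_vec u p v - path_vec u q v)).
  by move=> v vB; rewrite !path_vec_supported ?subrr.
by move=> r; rewrite lhsB !lhs_path_vec ?subrr.
Qed.

Lemma root_path_head u x p q : root_path u (x :: p) -> root_path u q -> ohead q = Some x.
Proof.
move=> hp hq; have := path_vec_eq hp hq; have := root_path_link hp.
rewrite /parent_var; case ux: edge_var => [v|] // _ /(_ v).
have notin s : root_path u s -> u \notin s by case/and3P => _ _ /andP [].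
rewrite /= (path_vec_edge0 ux (notin _ hp)) /parent_var ux eqxx subr0.
case: q hq => [|y q] hq /=.
  by rewrite (negbTE (edge_var_parent_nil u ux)) subr0 => /eqP; rewrite oner_eq0.
rewrite (path_vec_edge0 ux (notin _ hq)) subr0.
by case: eqP => [/(edge_var_injr ux) <-|_ /eqP]; rewrite ?oner_eq0.
Qed.

Lemma root_path_unique u p q : root_path u p -> root_path u q -> p = q.
Proof.
elim: p u q => [|x p IH] u q hp hq.
  by case: q hq => // y q hq; have := root_path_head hq hp.
have [q' eq] : exists q', q = x :: q'.
  by case: q hq (root_path_head hp hq) => // y q _ [->]; exists q.
by subst q; rewrite (IH x q') ?(root_path_behead hp) ?(root_path_behead hq).
Qed.

Lemma adj_root_path a b pa pb : adj B a b -> root_path a pa -> root_path b pb ->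
  pa = b :: pb \/ pb = a :: pa.
Proof.
move=> ab ha hb; case: (boolP (b \in pa)) => bpa.
  left; case/splitPr: bpa ha => p1 p2 ha.
  have e2 := root_path_unique (root_path_suffix ha) hb; subst p2.
  apply: (root_path_unique ha (root_path_cons ab _ hb)).
  by case/and3P: ha => _ _ /andP []; rewrite mem_cat negb_or => /andP [].
right; apply: root_path_unique hb (root_path_cons _ _ ha); first by rewrite adj_sym.
by rewrite in_cons (negbTE bpa) orbF (adj_neq ab).
Qed.

Lemma root_path_adj a b pa : adj B a b -> root_path a pa -> exists pb, root_path b pb.
Proof.
move=> ab ha; case: (boolP (b \in pa)) => bpa.
  by case/splitPr: bpa ha => p1 p2 /root_path_suffix; exists p2.
exists (a :: pa); apply: root_path_cons ha; first by rewrite adj_sym.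
by rewrite in_cons (negbTE bpa) orbF (adj_neq ab).
Qed.

Definition subtree (u : node) : pred node := fun n => `[< in_subtree B u n >].

Lemma subtreeE u n pn : root_path n pn -> subtree u n = (u \in n :: pn).
Proof.
move=> hn; apply/asboolP/idP => [[p [pp rp up uin]] | uin].
  by rewrite -(root_path_unique (p := p) _ hn) //; apply/and3P.
by exists pn; case/and3P: hn.
Qed.

(* Coefficient of column v in (sum of the server rows in P) - (sum of the customer rows in P). *)
Definition rows_coef (P : pred node) (v : var) : R :=
  match v with
  | inl (i, j) => (P (inr j))%:R - (P (inl i))%:R
  | inr j => (P (inr j))%:R
  end.

Lemma rows_coef_sum (P : pred node) (w : var -> R) :
  \sum_v rows_coef P v * w v =
  \sum_(l | P (inr l)) lhs w (rshift nI l) - \sum_(k | P (inl k)) lhs w (lshift nJ k).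
Proof.
transitivity (\sum_v (\sum_(l | P (inr l)) coef R (rshift nI l) v
                      - \sum_(k | P (inl k)) coef R (lshift nJ k) v) * w v).
  apply: eq_bigr => v _; congr (_ * _); rewrite /coef.
  under eq_bigr do rewrite split_rshift; under [X in _ - X]eq_bigr do rewrite split_lshift.
  case: v => [[i j]|j] /=; first by rewrite !sum_delta.
  by rewrite [X in _ - X]big1 // subr0 sum_delta.
rewrite /lhs; under eq_bigr do rewrite mulrBl !mulr_suml.
by rewrite sumrB !(exchange_big _ _ _ xpredT).
Qed.

Lemma basic_solution_rows lam mu eps z (P : pred node) :
  basic_solution lam mu eps B z ->
  \sum_v rows_coef P v * z v = \sum_(l | P (inr l)) (mu l - eps) - \sum_(k | P (inl k)) lam k.
Proof.
case=> _ hz; rewrite rows_coef_sum; congr (_ - _); apply: eq_bigr => x _.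
  by rewrite /lhs hz /rhs split_rshift.
by rewrite /lhs hz /rhs split_lshift.
Qed.

Lemma adj_closed_root (Q : pred node) n :
  (forall a b, adj B a b -> Q a = Q b) -> Q n -> exists2 j, inr j \in B & Q (inr j).
Proof.
move=> closedQ Qn; case: (boolP [exists j, (inr j \in B) && Q (inr j)]).
  by case/existsP => j /andP [jB Qj]; exists j.
rewrite negb_exists => /forallP noroot.
have [w sw hw] := supported_solution_exists (fun r => (split r == n)%:R).
have := rows_coef_sum Q w; rewrite big1 => [|v _]; last first.
  case vB: (v \in B); last by rewrite sw ?vB // mulr0.
  case: v vB => [[i j]|j] vB /=; first by rewrite (closedQ (inr j) (inl i)) // subrr mul0r.
  by move: (noroot j); rewrite vB /= => /negbTE ->; rewrite mul0r.
under eq_bigr do rewrite hw split_rshift; under [X in _ - X]eq_bigr do rewrite hw split_lshift.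
case: n Qn {hw} => [i|j] Qn.
  rewrite big1 // sub0r.
  under eq_bigr do rewrite (inj_eq inl_inj) eq_sym.
  by rewrite sum_delta Qn => /eqP; rewrite eq_sym oppr_eq0 oner_eq0.
rewrite [X in _ - X]big1 // subr0.
under eq_bigr do rewrite (inj_eq inr_inj) eq_sym.
by rewrite sum_delta Qn => /eqP; rewrite eq_sym oner_eq0.
Qed.

Lemma root_path_exists n : exists p, root_path n p.
Proof.
pose Q : pred node := fun n => ~~ `[< exists p, root_path n p >].
have closedQ a b : adj B a b -> Q a = Q b.
  move=> ab; congr negb; apply/asboolP/asboolP => -[p hp].
    exact: root_path_adj hp.
  by apply: root_path_adj hp; rewrite adj_sym.
case: (boolP (Q n)) => [Qn | /negPn /asboolP //].
have [j jB] := adj_closed_root closedQ Qn.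
by case/negP; apply/asboolP; exists [::]; apply: root_path_nil.
Qed.

Lemma basic_var_parent v : v \in B ->
  exists n, exists2 pn, root_path n pn & parent_var n pn = Some v.
Proof.
case: v => [[i j]|j] vB; last by exists (inr j), [::]; first exact: root_path_nil.
have [pi hi] := root_path_exists (inl i); have [pj hj] := root_path_exists (inr j).
case: (adj_root_path (vB : adj B (inl i) (inr j)) hi hj) => e.
  by exists (inl i), pi; rewrite // e.
by exists (inr j), pj; rewrite // e.
Qed.

Lemma parent_var_inj u pu n pn v : root_path u pu -> root_path n pn ->
  parent_var u pu = Some v -> parent_var n pn = Some v -> u = n.
Proof.
case: pu => [|x p] hu; case: pn => [|y q] hn.
- by rewrite /parent_var; case: u n {hu hn} => [?|?] [?|?] //= [<-] [->].
- by move=> h /(edge_var_parent_nil u); rewrite h eqxx.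
- by move=> /(edge_var_parent_nil n) /[swap] ->; rewrite eqxx.
move=> ux ny; case: (edge_var_end ux ny) => // nx; case: (edge_var_end ny ux) => // uy.
subst x y; have := root_path_unique (root_path_behead hu) hn.
by move=> ep; case/and3P: hu => _ _; rewrite ep /= !inE eqxx !orbT.
Qed.

Definition node_sign (u : node) : R := if u is inr _ then 1 else -1.

Lemma rows_coef_parent u n pn v : root_path n pn -> parent_var n pn = Some v ->
  rows_coef (subtree u) v = node_sign n * (u == n)%:R.
Proof.
case: pn => [|x p] hn hv.
  by case: n hn hv => // j hn [<-]; rewrite /= (subtreeE u hn) mem_seq1 mul1r.
have hx := root_path_behead hn.
have subtree_n : (subtree u n)%:R = (u == n)%:R + (subtree u x)%:R :> R.
  rewrite (subtreeE u hn) (subtreeE u hx) in_cons; case: eqP => [->|] /=; last by rewrite add0r.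
  by case/and3P: hn => _ _ /andP [/negbTE -> _]; rewrite addr0.
move: hv; rewrite /parent_var; case: n x hn hx subtree_n => [i|j] [k|l] //= _ _ subtree_n [<-] /=.
  by rewrite subtree_n; lra.
by rewrite subtree_n; lra.
Qed.

Lemma rows_coef_subtree u pu v : root_path u pu -> v \in B ->
  rows_coef (subtree u) v = node_sign u * (parent_var u pu == Some v)%:R.
Proof.
move=> hu vB; have [n [pn hn hv]] := basic_var_parent vB.
rewrite (rows_coef_parent u hn hv); case: (eqVneq u n) => [eun | un].
  by subst n; rewrite (root_path_unique hu hn) hv eqxx.
case: eqP => [/(parent_var_inj hu hn)/(_ hv) eun | _]; last by rewrite !mulr0.
by rewrite eun eqxx in un.
Qed.

Definition subtree_excess (lam : 'I_nI -> R) (mu : 'I_nJ -> R) (eps : R) (u : node) : R :=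
  \sum_(l | subtree u (inr l)) (mu l - eps) - \sum_(k | subtree u (inl k)) lam k.

Lemma parent_var_value lam mu eps z u pu v :
  basic_solution lam mu eps B z -> root_path u pu -> parent_var u pu = Some v ->
  node_sign u * z v = subtree_excess lam mu eps u.
Proof.
move=> hz hu hv; have vB : v \in B by have := root_path_link hu; rewrite hv.
rewrite /subtree_excess -(basic_solution_rows _ hz) (bigD1 v) //= big1 ?addr0.
  by rewrite (rows_coef_subtree hu vB) hv eqxx mulr1.
move=> v' v'v; case v'B: (v' \in B); last by rewrite hz.1 ?v'B // mulr0.
by rewrite (rows_coef_subtree hu v'B) hv (inj_eq Some_inj) eq_sym (negbTE v'v) mulr0 mul0r.
Qed.

Lemma subtree_excess_le lam mu eps u :
  0 <= eps -> subtree_excess lam mu eps u <= subtree_excess lam mu 0 u.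
Proof. by move=> eps0; rewrite lerD2r; apply: ler_sum => l _; lra. Qed.

Lemma subtree_excess_gt0 lam mu eps j :
  eps < subtree_ratio lam mu B j -> 0 < subtree_excess lam mu eps (inr j).
Proof.
move=> lt_ratio.
have [p hp] := root_path_exists (inr j).
have subtreeS_gt0 : (0 < #|subtreeS B j|)%N.
  apply/card_gt0P; exists j; rewrite inE.
  by change (subtree (inr j) (inr j)); rewrite (subtreeE _ hp) mem_head.
have eS (F : 'I_nJ -> R) :
    \sum_(l | subtree (inr j) (inr l)) F l = \sum_(l in subtreeS B j) F l.
  by apply: eq_bigl => l; rewrite inE.
have eC : \sum_(k | subtree (inr j) (inl k)) lam k = \sum_(k in subtreeC B j) lam k.
  by apply: eq_bigl => k; rewrite inE.
rewrite /subtree_excess sumrB !eS eC sumr_const -mulr_natr.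
by move: lt_ratio; rewrite /subtree_ratio ltr_pdivlMr ?ltr0n //; lra.
Qed.

End BasisForest.

Lemma nondeg_feasible_basis_gt0 (R : realFieldType) (nI nJ : nat)
    (L : {set 'I_nI * 'I_nJ}) (lam : 'I_nI -> R) (mu : 'I_nJ -> R) (eps : R) (B : {set var nI nJ}) z v :
  nondeg_feasible_basis L lam mu eps B -> basic_solution lam mu eps B z -> v \in B -> 0 < z v.
Proof. by case=> [[_ feas] nd] hz vB; rewrite lt0r nd // feas. Qed.

Lemma gt0_nondeg_feasible_basis (R : realFieldType) (nI nJ : nat)
    (L : {set 'I_nI * 'I_nJ}) (lam : 'I_nI -> R) (mu : 'I_nJ -> R) (eps : R) (B : {set var nI nJ}) :
  is_basis R L B -> (forall z, basic_solution lam mu eps B z -> forall v, v \in B -> 0 < z v) ->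
  nondeg_feasible_basis L lam mu eps B.
Proof.
move=> hB pos; split; last by move=> z hz v vB; rewrite gt_eqF ?pos.
split=> // z hz v; case vB: (v \in B); first exact/ltW/pos.
by rewrite hz.1 ?vB.
Qed.

Theorem lemma3 (R : realFieldType) (nI nJ : nat) (L : {set 'I_nI * 'I_nJ})
  (lam : 'I_nI -> R) (mu : 'I_nJ -> R) (theta : 'I_nI * 'I_nJ -> R)
  (B : {set var nI nJ}) (eps : R) :
  (forall i, 0 < lam i) -> (forall j, 0 < mu j) ->
  (forall e, e \in L -> 0 <= theta e) ->
  nondeg_feasible_basis L lam mu 0 B ->
  0 <= eps ->
  (forall j : 'I_nJ, eps < subtree_ratio lam mu B j) ->
  nondeg_feasible_basis L lam mu eps B.
Proof.
move=> _ _ _ nd0 eps0 lt_ratio; have [[[_ basisB] _] _] := nd0.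
apply: gt0_nondeg_feasible_basis => [|z hz v vB]; first by case: nd0 => -[].
have [z0 sz0 hz0] := supported_solution_exists basisB (rhs lam mu 0).
have basic_z0 : basic_solution lam mu 0 B z0 by split.
have [u [pu hu hv]] := basic_var_parent basisB vB.
have := parent_var_value basisB hz hu hv; have := parent_var_value basisB basic_z0 hu hv.
case: u {hu hv} => [i | j] /= val0 val.
  have := nondeg_feasible_basis_gt0 nd0 basic_z0 vB.
  have := subtree_excess_le B lam mu (inl i) eps0; lra.
by rewrite mul1r in val; rewrite val subtree_excess_gt0.
Qed.
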